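(* Let $(X_1,X_2)$ be an extensible pair and $k\ge1$ with $\det Z_k\neq0$. Then $P(Z_k)/Q(Z_k)$ is a cyclic group. Moreover, if $u,v$ are any two adjacent nodes of $Z_k$ both lying in $B_k:=N(A_k)\cup\{\xi_1,\xi_2\}$, then the class $[\omega_u-\omega_v]$ generates $P(Z_k)/Q(Z_k)$.
   Context: A marked Dynkin diagram $(X,\xi)$ is the Dynkin diagram of a symmetrizable generalized Cartan matrix $C(X)$ with a distinguished node $\xi$; $\det X:=\det C(X)$; $X(-1)$ is $X$ with $\xi$ and incident edges deleted ($\det$ of the empty diagram is $1$); $\Delta_X=\det X-\det X(-1)$, $\Delta_i:=\Delta_{X_i}$. $(X_1,X_2)$ is an extensible pair if $\det X_i\ne0$, $\Delta_i\ne0$, $\gcd(\det X_i,\Delta_i)=1$ ($i=1,2$) and $\gcd(\Delta_1,\Delta_2)=1$. $Z_k=Z_k(X_1,X_2)$ is obtained from the disjoint union of $X_1$, a path $A_k$ with nodes $1,\dots,k$ (consecutive nodes joined by simple edges) and $X_2$, by adding simple edges $\xi_1$—$1$ and $k$—$\xi_2$. For the Kac–Moody algebra $\mathfrak g(Z_k)$ with $\det Z_k\ne0$: $\omega_p$ are the fundamental weights ($\omega_p(\check\alpha_q)=\delta_{pq}$), $P(Z_k)=\bigoplus\mathbb Z\omega_p$ is the weight lattice and $Q(Z_k)=\bigoplus\mathbb Z\alpha_p$ the root lattice. *)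

From HB Require Import structures.
From mathcomp Require Import all_boot all_order all_algebra.
Set Implicit Arguments. Unset Strict Implicit. Unset Printing Implicit Defensive.
Import Order.TTheory GRing.Theory Num.Theory.
Local Open Scope ring_scope.

Definition is_GCM n (A : 'M[int]_n) : Prop :=
  (forall i, A i i = 2) /\
  (forall i j, i != j -> A i j <= 0) /\
  (forall i j, A i j = 0 <-> A j i = 0).

Definition symmetrizable n (A : 'M[int]_n) : Prop :=
  exists d : 'I_n -> rat, (forall i, 0 < d i) /\
    forall i j, d i * (A i j)%:~R = d j * (A j i)%:~R.

Definition is_symm_GCM n (A : 'M[int]_n) : Prop := is_GCM A /\ symmetrizable A.

(* A marked diagram (X, xi) is given by its Cartan matrix A and node xi. *)
(* det X(-1): determinant of A with row and column xi deleted (empty det = 1). *)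
Definition detm1 n (A : 'M[int]_n) (xi : 'I_n) : int := \det (row' xi (col' xi A)).

Definition Delta n (A : 'M[int]_n) (xi : 'I_n) : int := \det A - detm1 A xi.

Definition extensible_pair n1 n2 (A1 : 'M[int]_n1) (xi1 : 'I_n1)
    (A2 : 'M[int]_n2) (xi2 : 'I_n2) : Prop :=
  [/\ \det A1 != 0, Delta A1 xi1 != 0 & coprimez (\det A1) (Delta A1 xi1)] /\
  [/\ \det A2 != 0, Delta A2 xi2 != 0 & coprimez (\det A2) (Delta A2 xi2)] /\
  coprimez (Delta A1 xi1) (Delta A2 xi2).

(* Cartan matrix of the path A_k; node i (1-based) is index i-1. *)
Definition cartanA k : 'M[int]_k :=
  \matrix_(i, j) (if i == j then 2
                  else if (i.+1 == j :> nat) || (j.+1 == i :> nat) then -1 else 0).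

(* Edge xi1 -- 1 (first node of A_k, index 0). *)
Definition edge1 n1 k (xi1 : 'I_n1) : 'M[int]_(n1, k) :=
  \matrix_(i, j) (if (i == xi1) && (j == 0%N :> nat) then -1 else 0).

(* Edge k -- xi2, inside the block (X1 + A_k) x X2; node k has index n1+k-1. *)
Definition edge2 n1 k n2 (xi2 : 'I_n2) : 'M[int]_(n1 + k, n2) :=
  \matrix_(i, j) (if (i == (n1 + k).-1 :> nat) && (j == xi2) then -1 else 0).

(* Cartan matrix of Z_k(X1,X2); nodes: X1 (indices < n1), then A_k
   (indices n1 .. n1+k-1), then X2 (indices n1+k+j). *)
Definition Zk n1 k n2 (A1 : 'M[int]_n1) (xi1 : 'I_n1)
    (A2 : 'M[int]_n2) (xi2 : 'I_n2) : 'M[int]_(n1 + k + n2) :=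
  block_mx (block_mx A1 (edge1 k xi1) (edge1 k xi1)^T (cartanA k))
           (edge2 n1 k xi2) (edge2 n1 k xi2)^T A2.

Definition in_Bk n1 k n2 (xi1 : 'I_n1) (xi2 : 'I_n2) (u : 'I_(n1 + k + n2)) : bool :=
  [|| (n1 <= u < n1 + k)%N, (u == xi1 :> nat) | (u == n1 + k + xi2 :> nat)%N].

(* Weight lattice P = Z^n in the basis of fundamental weights omega_p;
   simple root alpha_q = sum_p a_{pq} omega_p, i.e. column q of A. *)
Definition omega n (p : 'I_n) : 'cV[int]_n := delta_mx p 0.
Definition alpha n (A : 'M[int]_n) (q : 'I_n) : 'cV[int]_n := col q A.

Definition in_root_lattice n (A : 'M[int]_n) (w : 'cV[int]_n) : Prop :=
  exists c : 'I_n -> int, w = \sum_q c q *: alpha A q.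

Definition generates_PQ n (A : 'M[int]_n) (g : 'cV[int]_n) : Prop :=
  forall w : 'cV[int]_n, exists m : int, in_root_lattice A (w - m *: g).

Definition PQ_cyclic n (A : 'M[int]_n) : Prop := exists g, generates_PQ A g.

(* Work in P = Z^N modulo Q, the column lattice of the Cartan matrix of Z_k.
   Along the chain xi1 - 1 - ... - k - xi2 the simple root of a path node t is
   2 omega_t - omega_(t-1) - omega_(t+1), so all consecutive differences of
   fundamental weights along the chain are congruent to d = omega_1 - omega_xi1.
   For a marked block (X, xi) attached to the chain at xi, applying the Cartan
   matrix to the embeddings of adj(C(X)) x and of adj(C(X) - E_xi,xi) x shows
   that det X * x lies in Q + Z omega_1 (the neighbour of xi) and Delta_X * x
   lies in Q + Z d.  As Delta_1 and Delta_2 are coprime, omega_xi1 and hence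
   every chain weight lies in Q + Z d; as det X_i and Delta_i are coprime, so
   does every weight of X_i.  Thus d generates P/Q, and so does the weight
   difference of any two adjacent nodes of B_k, which is congruent to +-d. *)

From mathcomp Require Import all_boot all_order all_algebra.
From mathcomp Require Import zify ring.
Set Implicit Arguments. Unset Strict Implicit. Unset Printing Implicit Defensive.
Import Order.TTheory GRing.Theory Num.Theory.
Local Open Scope ring_scope.

Section RootLattice.

Variables (n : nat) (A : 'M[int]_n).

Lemma mulmx_sum_alpha (y : 'cV[int]_n) : A *m y = \sum_q y q 0 *: alpha A q.
Proof.
rewrite [y in LHS]matrix_sum_delta mulmx_sumr.
by apply: eq_bigr => q _; rewrite big_ord1 -scalemxAr /alpha colE.
Qed.

Lemma in_root_latticeP (w : 'cV[int]_n) :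
  in_root_lattice A w <-> exists y, w = A *m y.
Proof.
split=> [[c ->] | [y ->]]; last by exists (fun q => y q 0); apply: mulmx_sum_alpha.
by exists (\col_q c q); rewrite mulmx_sum_alpha; apply: eq_bigr => q _; rewrite mxE.
Qed.

Lemma in_root_lattice_mul (y : 'cV[int]_n) : in_root_lattice A (A *m y).
Proof. by apply/in_root_latticeP; exists y. Qed.

Lemma in_root_lattice_alpha q : in_root_lattice A (alpha A q).
Proof. by rewrite /alpha colE; apply: in_root_lattice_mul. Qed.

Lemma in_root_lattice_add w1 w2 :
  in_root_lattice A w1 -> in_root_lattice A w2 -> in_root_lattice A (w1 + w2).
Proof.
move=> /in_root_latticeP[y1 ->] /in_root_latticeP[y2 ->].
by rewrite -mulmxDr; apply: in_root_lattice_mul.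
Qed.

Lemma in_root_lattice_scale (a : int) w :
  in_root_lattice A w -> in_root_lattice A (a *: w).
Proof. by move=> /in_root_latticeP[y ->]; rewrite scalemxAr; apply: in_root_lattice_mul. Qed.

Lemma in_root_lattice_opp w : in_root_lattice A w -> in_root_lattice A (- w).
Proof. by move=> /(in_root_lattice_scale (-1)); rewrite scaleN1r. Qed.

Lemma in_root_lattice0 : in_root_lattice A 0.
Proof. by rewrite -(mulmx0 _ A); apply: in_root_lattice_mul. Qed.

End RootLattice.

Section ModuloRootLattice.

Variables (n : nat) (A : 'M[int]_n).

Definition in_QZg (g w : 'cV[int]_n) := exists m : int, in_root_lattice A (w - m *: g).

Lemma in_QZg_root g w : in_root_lattice A w -> in_QZg g w.
Proof. by exists 0; rewrite scale0r subr0. Qed.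

Lemma in_QZg_gen g : in_QZg g g.
Proof. by exists 1; rewrite scale1r subrr; apply: in_root_lattice0. Qed.

Lemma in_QZg_root_sub g w : in_root_lattice A (w - g) -> in_QZg w g.
Proof. by exists 1; rewrite scale1r -opprB; apply: in_root_lattice_opp. Qed.

Lemma in_QZg_add g w1 w2 : in_QZg g w1 -> in_QZg g w2 -> in_QZg g (w1 + w2).
Proof.
move=> [m1 h1] [m2 h2]; exists (m1 + m2).
by rewrite scalerDl opprD addrACA; apply: in_root_lattice_add.
Qed.

Lemma in_QZg_scale g (a : int) w : in_QZg g w -> in_QZg g (a *: w).
Proof.
move=> [m h]; exists (a * m).
by rewrite -scalerA -scalerBr; apply: in_root_lattice_scale.
Qed.

Lemma in_QZg_opp g w : in_QZg g w -> in_QZg g (- w).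
Proof. by move=> /(in_QZg_scale (-1)); rewrite scaleN1r. Qed.

Lemma in_QZg_mul_add g y (s : int) : in_QZg g (A *m y + s *: g).
Proof.
by apply: in_QZg_add; [apply/in_QZg_root/in_root_lattice_mul | apply/in_QZg_scale/in_QZg_gen].
Qed.

Lemma in_QZg_sub g w1 w2 : in_QZg g w1 -> in_QZg g w2 -> in_QZg g (w1 - w2).
Proof. by move=> h1 /in_QZg_opp; apply: in_QZg_add. Qed.

Lemma in_QZg_oppl g w : in_QZg g w -> in_QZg (- g) w.
Proof. by move=> [m h]; exists (- m); rewrite scalerN scaleNr opprK. Qed.

Lemma in_QZg_trans g h w : in_QZg g h -> in_QZg h w -> in_QZg g w.
Proof.
move=> [m1 h1] [m2 h2]; exists (m2 * m1).
have -> : w - (m2 * m1) *: g = (w - m2 *: h) + m2 *: (h - m1 *: g).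
  by rewrite scalerBr scalerA addrA subrK.
by apply: in_root_lattice_add => //; apply: in_root_lattice_scale.
Qed.

Lemma in_QZg_coprime g w (p q : int) :
  coprimez p q -> in_QZg g (p *: w) -> in_QZg g (q *: w) -> in_QZg g w.
Proof.
move=> /coprimezP[[u v] /= uv1] hp hq.
have -> : w = u *: (p *: w) + v *: (q *: w) by rewrite !scalerA -scalerDl uv1 scale1r.
by apply: in_QZg_add; apply: in_QZg_scale.
Qed.

Lemma generates_PQ_from_omega g : (forall p, in_QZg g (omega p)) -> generates_PQ A g.
Proof.
move=> hom w; have -> : w = \sum_p w p 0 *: omega p.
  by rewrite [LHS]matrix_sum_delta; apply: eq_bigr => p _; rewrite big_ord1.
apply: (big_ind (in_QZg g)) => [||p _]; last exact: in_QZg_scale.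
- by apply: in_QZg_root; apply: in_root_lattice0.
- exact: in_QZg_add.
Qed.

Lemma generates_PQ_trans g h : generates_PQ A h -> in_QZg g h -> generates_PQ A g.
Proof. by move=> gen_h hg w; apply: in_QZg_trans hg (gen_h w). Qed.

Lemma in_root_lattice_step_const (f : nat -> 'cV[int]_n) m :
    (forall j, (j < m)%N -> in_root_lattice A (f j.+2 - f j.+1 - (f j.+1 - f j))) ->
  forall j, (j <= m)%N -> in_root_lattice A (f j.+1 - f j - (f 1 - f 0)).
Proof.
move=> step2; elim=> [|j IHj] hj; first by rewrite subrr; apply: in_root_lattice0.
have -> : f j.+2 - f j.+1 - (f 1 - f 0) =
    (f j.+2 - f j.+1 - (f j.+1 - f j)) + (f j.+1 - f j - (f 1 - f 0)).
  by rewrite addrA subrK.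
by apply: in_root_lattice_add; [apply: step2 | apply: IHj; apply: ltnW].
Qed.

Lemma in_QZg_progression (f : nat -> 'cV[int]_n) g m :
    (forall j, (j <= m)%N -> in_root_lattice A (f j.+1 - f j - g)) ->
  forall j, (j <= m.+1)%N -> in_QZg g (f j - f 0).
Proof.
move=> step; elim=> [|j IHj] hj; first by rewrite subrr; apply/in_QZg_root/in_root_lattice0.
have -> : f j.+1 - f 0 = (f j.+1 - f j - g) + g + (f j - f 0) by rewrite subrK addrA subrK.
apply: in_QZg_add; last by apply: IHj; apply: ltnW.
by apply: in_QZg_add; [apply/in_QZg_root/step | apply: in_QZg_gen].
Qed.

End ModuloRootLattice.

Lemma det_sub_delta n (A : 'M[int]_n) (xi : 'I_n) :
  \det (A - delta_mx xi xi) = Delta A xi.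
Proof.
rewrite /Delta /detm1 (expand_det_row _ xi) (expand_det_row A xi).
have cofE j : cofactor (A - delta_mx xi xi) xi j = cofactor A xi j.
  rewrite /cofactor; congr (_ * \det _); apply/matrixP => a b; rewrite !mxE.
  by rewrite eq_sym (negbTE (neq_lift xi a)) /= subr0.
under eq_bigr => j _ do rewrite cofE !mxE eqxx /= mulrBl.
rewrite sumrB; congr (_ - _).
rewrite (bigD1 xi) //= big1 ?addr0 => [|j /negbTE ->]; last by rewrite mul0r.
by rewrite eqxx mul1r /cofactor exprD -expr2 sqrr_sign mul1r.
Qed.

Lemma delta_mulmx m n (i : 'I_m) (j : 'I_n) (y : 'cV[int]_n) :
  delta_mx i j *m y = y j 0 *: delta_mx i 0.
Proof.
by rewrite -(mul_delta_mx (0 : 'I_1)) -mulmxA -rowE [row j y]mx11_scalar mul_mx_scalar mxE.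
Qed.

Section MarkedBlock.

(* [P] embeds a marked diagram [(A, xi)] into the diagram of [Z]; the only
   edge leaving the block joins [xi] to the node with fundamental weight [p]. *)
Variables (N n : nat) (Z : 'M[int]_N) (A : 'M[int]_n) (xi : 'I_n).
Variables (P : 'M[int]_(N, n)) (p : 'cV[int]_N).
Hypothesis Z_mul_block : forall y, Z *m (P *m y) = P *m (A *m y) - y xi 0 *: p.

Lemma block_det_in_QZg x : in_QZg Z p (\det A *: (P *m x)).
Proof.
set y := \adj A *m x.
have -> : \det A *: (P *m x) = Z *m (P *m y) + y xi 0 *: p.
  by rewrite Z_mul_block subrK /y [A *m _]mulmxA mul_mx_adj mul_scalar_mx scalemxAr.
exact: in_QZg_mul_add.
Qed.

Lemma block_Delta_in_QZg x :
  in_QZg Z (p - P *m delta_mx xi 0) (Delta A xi *: (P *m x)).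
Proof.
set y := \adj (A - delta_mx xi xi) *m x.
have Ay : Delta A xi *: x = A *m y - y xi 0 *: delta_mx xi 0.
  by rewrite -delta_mulmx -mulmxBl /y mulmxA mul_mx_adj mul_scalar_mx det_sub_delta.
have -> : Delta A xi *: (P *m x) = Z *m (P *m y) + y xi 0 *: (p - P *m delta_mx xi 0).
  by rewrite Z_mul_block scalemxAr Ay mulmxBr scalerBr -scalemxAr addrA subrK.
exact: in_QZg_mul_add.
Qed.

End MarkedBlock.

Section PathExtension.

Variables (n1 k n2 : nat) (A1 : 'M[int]_n1) (xi1 : 'I_n1) (A2 : 'M[int]_n2) (xi2 : 'I_n2).

Local Notation N := (n1 + k.+1 + n2).
Local Notation Z := (Zk k.+1 A1 xi1 A2 xi2).

Definition node_X1 (a : 'I_n1) : 'I_N := lshift n2 (lshift k.+1 a).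
Definition node_A (t : 'I_k.+1) : 'I_N := lshift n2 (rshift n1 t).
Definition node_X2 (j : 'I_n2) : 'I_N := rshift (n1 + k.+1) j.

Lemma node_cases p :
  [\/ exists a, p = node_X1 a, exists t, p = node_A t | exists j, p = node_X2 j].
Proof.
rewrite -[p]splitK; case: (split p) => [p'|j]; last by apply: Or33; exists j.
by rewrite -[p']splitK; case: (split p') => [a|t]; [apply: Or31; exists a | apply: Or32; exists t].
Qed.

Definition chain_pos (j : nat) : nat :=
  if j is j'.+1 then (if (j' <= k)%N then n1 + j' else n1 + k.+1 + xi2) else xi1.

Lemma chain_pos_lt j : (chain_pos j < N)%N.
Proof. by have := ltn_ord xi1; have := ltn_ord xi2; case: j => [|j] /=; [|case: ifP]; lia. Qed.

(* The chain [xi1 -- 1 -- ... -- k+1 -- xi2] of nodes of [Z], indexed from 0. *)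
Definition chain (j : nat) : 'I_N := Ordinal (chain_pos_lt j).

Lemma chain0 : chain 0 = node_X1 xi1.
Proof. exact: val_inj. Qed.

Lemma chain_node_A (t : 'I_k.+1) : chain t.+1 = node_A t.
Proof. by apply: val_inj; rewrite /= -ltnS ltn_ord. Qed.

Lemma chain_last : chain k.+2 = node_X2 xi2.
Proof. by apply: val_inj; rewrite /= ltnn. Qed.

Lemma in_Bk_chain u : in_Bk xi1 xi2 u -> exists2 j, (j <= k.+2)%N & u = chain j.
Proof.
case/or3P => [/andP[le_n1u lt_u] | /eqP u_xi1 | /eqP u_xi2].
- by exists (u - n1).+1; [lia | apply: val_inj; rewrite /=; case: ifP; lia].
- by exists 0%N; last exact: val_inj.
- by exists k.+2; last by apply: val_inj; rewrite /= ltnn.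
Qed.

Lemma edge1E : edge1 k.+1 xi1 = - delta_mx xi1 0.
Proof. by apply/matrixP => a b; rewrite !mxE; case: (_ && _). Qed.

Lemma edge2E : edge2 n1 k.+1 xi2 = - delta_mx (rshift n1 ord_max) xi2.
Proof.
apply/matrixP => a b; rewrite !mxE.
have -> : (n1 + k.+1).-1 = n1 + k by rewrite addnS.
by case: (_ && _).
Qed.

Definition emb_X1 : 'M[int]_(N, n1) := col_mx (col_mx 1%:M 0) 0.
Definition emb_X2 : 'M[int]_(N, n2) := col_mx 0 1%:M.

Lemma emb_X1_mul (x : 'cV[int]_n1) : emb_X1 *m x = col_mx (col_mx x 0) 0.
Proof. by rewrite !mul_col_mx mul1mx !mul0mx. Qed.

Lemma emb_X2_mul (x : 'cV[int]_n2) : emb_X2 *m x = col_mx 0 x.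
Proof. by rewrite mul_col_mx mul1mx mul0mx. Qed.

Lemma emb_X1_delta a : emb_X1 *m delta_mx a 0 = omega (node_X1 a).
Proof. by rewrite emb_X1_mul /omega !delta_mx_ushift. Qed.

Lemma emb_X2_delta j : emb_X2 *m delta_mx j 0 = omega (node_X2 j).
Proof. by rewrite emb_X2_mul /omega delta_mx_dshift. Qed.

Lemma Zk_mul_emb_X1 y :
  Z *m (emb_X1 *m y) = emb_X1 *m (A1 *m y) - y xi1 0 *: omega (chain 1).
Proof.
rewrite (chain_node_A ord0) /omega /node_A delta_mx_ushift delta_mx_dshift.
rewrite !emb_X1_mul /Zk !mul_block_col !mulmx0 !addr0.
rewrite edge1E edge2E !raddfN /= !trmx_delta !mulNmx !delta_mulmx col_mxEd mxE scale0r oppr0.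
by rewrite !scale_col_mx !scaler0 !opp_col_mx !oppr0 !add_col_mx !addr0 add0r.
Qed.

Lemma Zk_mul_emb_X2 z :
  Z *m (emb_X2 *m z) = emb_X2 *m (A2 *m z) - z xi2 0 *: omega (chain k.+1).
Proof.
rewrite (chain_node_A ord_max) /omega /node_A delta_mx_ushift delta_mx_dshift.
rewrite !emb_X2_mul /Zk -[X in col_mx X z]col_mx0 mul_block_col col_mx0 !mulmx0 !add0r.
rewrite edge2E mulNmx delta_mulmx delta_mx_dshift.
by rewrite !scale_col_mx !scaler0 !opp_col_mx !oppr0 !add_col_mx !addr0 !add0r.
Qed.

Ltac entry_crunch :=
  rewrite ?mxE -?(inj_eq val_inj) /= /chain_pos ?eqxx ?andbT;
  repeat match goal with x : 'I_?n |- _ =>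
    have := ltn_ord x; move: (nat_of_ord x) => ?; clear x end;
  repeat match goal with |- context [match ?x with O => _ | S _ => _ end] => case: x => [|?] end;
  repeat (case: ifP => /=); lia.

Lemma alpha_node_A (t : 'I_k.+1) :
  alpha Z (node_A t) = omega (chain t.+1) *+ 2 - omega (chain t) - omega (chain t.+2).
Proof.
apply/matrixP => i b; rewrite (ord1 b) [alpha _ _ _ _]mxE.
case: (node_cases i) => [[a ->] | [s ->] | [j ->]];
  rewrite /node_X1 /node_A /node_X2 /Zk;
  rewrite ?block_mxEul ?block_mxEur ?block_mxEdl ?block_mxEdr; entry_crunch.
Qed.

Lemma chain_index_cases j :
  (j <= k.+2)%N -> [\/ j = 0%N, exists t : 'I_k.+1, j = t.+1 | j = k.+2].
Proof.
case: j => [_ | j le_jk]; first exact: Or31.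
have [lt_jk | ge_jk] := ltnP j k.+1; first by apply: Or32; exists (Ordinal lt_jk).
by apply: Or33; apply/eqP; rewrite eqSS eqn_leq -ltnS le_jk ge_jk.
Qed.

Lemma chain_adjacent i j : (i <= k.+2)%N -> (j <= k.+2)%N ->
  chain i != chain j -> Z (chain i) (chain j) != 0 -> (i == j.+1) || (j == i.+1).
Proof.
move=> /chain_index_cases[-> | [s ->] | ->] /chain_index_cases[-> | [t ->] | ->];
  rewrite ?chain0 ?chain_node_A ?chain_last /node_X1 /node_A /node_X2 /Zk;
  rewrite ?block_mxEul ?block_mxEur ?block_mxEdl ?block_mxEdr; entry_crunch.
Qed.

Local Notation w j := (omega (chain j)).
Local Notation d := (w 1 - w 0).

Lemma chain_step_const j : (j <= k.+1)%N -> in_root_lattice Z (w j.+1 - w j - d).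
Proof.
apply: (in_root_lattice_step_const (f := fun j => w j)) => t lt_tk.
have -> : w t.+2 - w t.+1 - (w t.+1 - w t) = - alpha Z (node_A (Ordinal lt_tk)).
  by rewrite alpha_node_A; apply/matrixP => a b; rewrite !(mxE, mulmxnE); ring.
exact/in_root_lattice_opp/in_root_lattice_alpha.
Qed.

Lemma chain_sub0_in_QZg j : (j <= k.+2)%N -> in_QZg Z d (w j - w 0).
Proof. exact: (in_QZg_progression (f := fun j => w j) chain_step_const). Qed.

Lemma chain_last_step_in_QZg : in_QZg Z d (w k.+1 - w k.+2).
Proof.
rewrite -[w k.+1 - _]opprB -[w k.+2 - _](subrK d).
apply/in_QZg_opp/in_QZg_add; last exact: in_QZg_gen.
exact/in_QZg_root/chain_step_const.
Qed.

Lemma Delta_omega_X1_in_QZg a : in_QZg Z d (Delta A1 xi1 *: omega (node_X1 a)).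
Proof.
by have := block_Delta_in_QZg Zk_mul_emb_X1 (delta_mx a 0); rewrite !emb_X1_delta -chain0.
Qed.

Lemma Delta_omega_X2_in_QZg j : in_QZg Z d (Delta A2 xi2 *: omega (node_X2 j)).
Proof.
apply: in_QZg_trans chain_last_step_in_QZg _.
by have := block_Delta_in_QZg Zk_mul_emb_X2 (delta_mx j 0); rewrite !emb_X2_delta -chain_last.
Qed.

Section Coprime.

Hypothesis cop1 : coprimez (\det A1) (Delta A1 xi1).
Hypothesis cop2 : coprimez (\det A2) (Delta A2 xi2).
Hypothesis cop12 : coprimez (Delta A1 xi1) (Delta A2 xi2).

Lemma chain_in_QZg j : (j <= k.+2)%N -> in_QZg Z d (w j).
Proof.
have w0 : in_QZg Z d (w 0).
  apply: (in_QZg_coprime cop12); first by rewrite chain0; apply: Delta_omega_X1_in_QZg.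
  have -> : Delta A2 xi2 *: w 0 = Delta A2 xi2 *: w k.+2 - Delta A2 xi2 *: (w k.+2 - w 0).
    by rewrite scalerBr opprB addrCA subrr addr0.
  apply: in_QZg_sub; first by rewrite chain_last; apply: Delta_omega_X2_in_QZg.
  exact/in_QZg_scale/chain_sub0_in_QZg.
by move=> le_jk; rewrite -[w j](subrK (w 0)); apply: in_QZg_add => //; apply: chain_sub0_in_QZg.
Qed.

Lemma omega_in_QZg p : in_QZg Z d (omega p).
Proof.
case: (node_cases p) => [[a ->] | [t ->] | [j ->]].
- apply: (in_QZg_coprime cop1); last exact: Delta_omega_X1_in_QZg.
  apply: in_QZg_trans (chain_in_QZg (isT : 1 <= k.+2)%N) _.
  by rewrite -emb_X1_delta; exact: (block_det_in_QZg Zk_mul_emb_X1).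
- by rewrite -(chain_node_A t); apply: chain_in_QZg; rewrite ltnS ltnW.
- apply: (in_QZg_coprime cop2); last exact: Delta_omega_X2_in_QZg.
  apply: in_QZg_trans (chain_in_QZg (leqnSn k.+1)) _.
  by rewrite -emb_X2_delta; exact: (block_det_in_QZg Zk_mul_emb_X2).
Qed.

Lemma generates_PQ_first_step : generates_PQ Z d.
Proof. exact/generates_PQ_from_omega/omega_in_QZg. Qed.

End Coprime.

Lemma adjacent_in_QZg u v : u != v -> Z u v != 0 ->
  in_Bk xi1 xi2 u -> in_Bk xi1 xi2 v -> in_QZg Z (omega u - omega v) d.
Proof.
move=> uNv Zuv /in_Bk_chain[i le_i eq_u] /in_Bk_chain[j le_j eq_v]; subst u v.
have /orP[/eqP ij | /eqP ji] := chain_adjacent le_i le_j uNv Zuv; subst.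
- exact/in_QZg_root_sub/chain_step_const.
- by rewrite -opprB; apply/in_QZg_oppl/in_QZg_root_sub/chain_step_const.
Qed.

End PathExtension.

Theorem lemma3p11 (n1 n2 k : nat) (A1 : 'M[int]_n1) (xi1 : 'I_n1)
    (A2 : 'M[int]_n2) (xi2 : 'I_n2) :
  is_symm_GCM A1 -> is_symm_GCM A2 ->
  extensible_pair A1 xi1 A2 xi2 ->
  (1 <= k)%N ->
  \det (Zk k A1 xi1 A2 xi2) != 0 ->
  PQ_cyclic (Zk k A1 xi1 A2 xi2) /\
  (forall u v : 'I_(n1 + k + n2),
      u != v -> Zk k A1 xi1 A2 xi2 u v != 0 ->
      in_Bk xi1 xi2 u -> in_Bk xi1 xi2 v ->
      generates_PQ (Zk k A1 xi1 A2 xi2) (omega u - omega v)).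
Proof.
(* Only the three coprimality conditions of the extensible pair are used. *)
move=> _ _ [[_ _ cop1] [[_ _ cop2] cop12]].
case: k => [// | k] _ _.
have gen := generates_PQ_first_step (k := k) cop1 cop2 cop12.
split; first by eexists; exact: gen.
move=> u v uNv Zuv Bu Bv.
exact: generates_PQ_trans gen (adjacent_in_QZg uNv Zuv Bu Bv).
Qed.
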